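(* Let $\pi_+\in(0,1)$, $\pi_-=1-\pi_+$, let $p_+,p_-$ be densities on $\mathcal{X}$ and $\widetilde{p}_+=\frac{\pi_+p_++\pi_-^2p_-}{\pi_-^2+\pi_+}$, $\widetilde{p}_-=\frac{\pi_+^2p_++\pi_-p_-}{\pi_+^2+\pi_-}$. Let $\ell:\mathbb{R}\times\{+1,-1\}\to\mathbb{R}_+$ be a loss, $\mathcal{F}$ a class of functions $\mathcal{X}\to\mathbb{R}$, and let $\boldsymbol{x}_1,\dots,\boldsymbol{x}_n,\boldsymbol{x}_1',\dots,\boldsymbol{x}_n'\in\mathcal{X}$ be given points. Define $R(f)=\pi_+\mathbb{E}_{p_+}[\ell(f(\boldsymbol{x}),+1)]+\pi_-\mathbb{E}_{p_-}[\ell(f(\boldsymbol{x}),-1)]$, $$R^+_{\mathrm{PC}}(f)=\mathbb{E}_{\widetilde{p}_+(\boldsymbol{x})}[\ell(f(\boldsymbol{x}),+1)-\pi_+\ell(f(\boldsymbol{x}),-1)],\quad \widehat{R}^+_{\mathrm{PC}}(f)=\frac1n\sum_{i=1}^n\big(\ell(f(\boldsymbol{x}_i),+1)-\pi_+\ell(f(\boldsymbol{x}_i),-1)\big),$$ $$R^-_{\mathrm{PC}}(f)=\mathbb{E}_{\widetilde{p}_-(\boldsymbol{x}')}[\ell(f(\boldsymbol{x}'),-1)-\pi_-\ell(f(\boldsymbol{x}'),+1)],\quad \widehat{R}^-_{\mathrm{PC}}(f)=\frac1n\sum_{i=1}^n\big(\ell(f(\boldsymbol{x}_i'),-1)-\pi_-\ell(f(\boldsymbol{x}_i'),+1)\big),$$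 $\widehat{R}_{\mathrm{PC}}=\widehat{R}^+_{\mathrm{PC}}+\widehat{R}^-_{\mathrm{PC}}$, $\widehat{f}_{\mathrm{PC}}\in\arg\min_{f\in\mathcal{F}}\widehat{R}_{\mathrm{PC}}(f)$ and $f^\star\in\arg\min_{f\in\mathcal{F}}R(f)$. Then $$R(\widehat{f}_{\mathrm{PC}})-R(f^\star)\le2\sup_{f\in\mathcal{F}}\big|R^+_{\mathrm{PC}}(f)-\widehat{R}^+_{\mathrm{PC}}(f)\big|+2\sup_{f\in\mathcal{F}}\big|R^-_{\mathrm{PC}}(f)-\widehat{R}^-_{\mathrm{PC}}(f)\big|.$$
   Context: $\pi_\pm$ are class priors and $p_\pm$ class-conditional densities of a binary classification problem; $\widetilde{p}_\pm$ are the marginals of the first/second components of pairwise comparison data, and in the intended application $\boldsymbol{x}_i\sim\widetilde{p}_+$, $\boldsymbol{x}_i'\sim\widetilde{p}_-$. *)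

From HB Require Import structures.
From mathcomp Require Import all_boot all_order all_algebra.
From mathcomp Require Import all_classical all_reals all_analysis.
Set Implicit Arguments. Unset Strict Implicit. Unset Printing Implicit Defensive.
Import Order.TTheory GRing.Theory Num.Theory.
Local Open Scope classical_set_scope.
Local Open Scope ring_scope.

Section PCDefs.
Context {d : measure_display} {T : measurableType d} {R : realType}.
Variable mu : {measure set T -> \bar R}.

Definition Ep (p : T -> R) (g : T -> R) : R :=
  Rintegral mu setT (fun x => p x * g x).

Definition is_density (p : T -> R) : Prop :=
  [/\ measurable_fun setT p, (forall x, 0 <= p x) &
      (\int[mu]_x (p x)%:E = 1)%E].

(* labels: true = +1, false = -1 *)
Definition risk (pp : R) (pP pN : T -> R) (ell : R -> bool -> R) (f : T -> R) : R :=
  pp * Ep pP (fun x => ell (f x) true) + (1 - pp) * Ep pN (fun x => ell (f x) false).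

Definition ptilde_plus (pp : R) (pP pN : T -> R) (x : T) : R :=
  (pp * pP x + (1 - pp) ^+ 2 * pN x) / ((1 - pp) ^+ 2 + pp).

Definition ptilde_minus (pp : R) (pP pN : T -> R) (x : T) : R :=
  (pp ^+ 2 * pP x + (1 - pp) * pN x) / (pp ^+ 2 + (1 - pp)).

Definition RPC_plus (pp : R) (pP pN : T -> R) (ell : R -> bool -> R) (f : T -> R) : R :=
  Ep (ptilde_plus pp pP pN) (fun x => ell (f x) true - pp * ell (f x) false).

Definition RPC_minus (pp : R) (pP pN : T -> R) (ell : R -> bool -> R) (f : T -> R) : R :=
  Ep (ptilde_minus pp pP pN) (fun x => ell (f x) false - (1 - pp) * ell (f x) true).

End PCDefs.

Definition RPC_hat_plus {T : Type} {R : realType} (pp : R) (ell : R -> bool -> R)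
  (n : nat) (xs : 'I_n -> T) (f : T -> R) : R :=
  n%:R^-1 * \sum_(i < n) (ell (f (xs i)) true - pp * ell (f (xs i)) false).

Definition RPC_hat_minus {T : Type} {R : realType} (pp : R) (ell : R -> bool -> R)
  (n : nat) (xs' : 'I_n -> T) (f : T -> R) : R :=
  n%:R^-1 * \sum_(i < n) (ell (f (xs' i)) false - (1 - pp) * ell (f (xs' i)) true).

Definition RPC_hat {T : Type} {R : realType} (pp : R) (ell : R -> bool -> R)
  (n : nat) (xs xs' : 'I_n -> T) (f : T -> R) : R :=
  RPC_hat_plus pp ell xs f + RPC_hat_minus pp ell xs' f.

From HB Require Import structures.
From mathcomp Require Import all_boot all_order all_algebra.
From mathcomp Require Import all_classical all_reals all_analysis.
From mathcomp Require Import ring lra.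
Import Order.TTheory GRing.Theory Num.Theory.
Local Open Scope classical_set_scope.
Local Open Scope ring_scope.

(* Expanding the mixtures p~+ and p~- in terms of p+ and p-, both the pairwise
   comparison risk R^+_PC + R^-_PC and the classification risk R are the same
   linear combination of the four expectations E_{p+/-}[l(f, +/-1)], so the
   two risks coincide on F.  The bound is then the usual empirical risk
   minimisation argument: since fhat minimises the empirical risk,
   R(fhat) - R(fstar) is at most the sum of the deviations of R^+_PC and R^-_PC
   from their empirical versions at fhat and at fstar, and each of these four
   deviations is bounded by the corresponding supremum. *)

Section ExpectationLinearity.
Context {d : measure_display} {T : measurableType d} {R : realType}.
Variable mu : {measure set T -> \bar R}.

Lemma integrable_mulrBr (c : R) (p g h : T -> R) :
  mu.-integrable setT (fun x => (p x * g x)%:E) ->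
  mu.-integrable setT (fun x => (p x * h x)%:E) ->
  mu.-integrable setT (fun x => (p x * (g x - c * h x))%:E).
Proof.
move=> ig ih.
have ich := integrableZl measurableT c ih.
have := integrableB measurableT ig ich.
by apply: eq_integrable => // x _ /=; congr EFin; ring.
Qed.

Lemma Ep_subr (c : R) (p g h : T -> R) :
  mu.-integrable setT (fun x => (p x * g x)%:E) ->
  mu.-integrable setT (fun x => (p x * h x)%:E) ->
  Ep mu p (fun x => g x - c * h x) = Ep mu p g - c * Ep mu p h.
Proof.
move=> ig ih; rewrite /Ep -RintegralZl //.
rewrite -RintegralB //; last exact: (integrableZl measurableT c ih).
by congr Rintegral; apply: funext => x; ring.
Qed.

Lemma Ep_mixture (a b k : R) (p q g : T -> R) :
  mu.-integrable setT (fun x => (p x * g x)%:E) ->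
  mu.-integrable setT (fun x => (q x * g x)%:E) ->
  Ep mu (fun x => (a * p x + b * q x) / k) g = (a * Ep mu p g + b * Ep mu q g) / k.
Proof.
move=> ip iq.
have iap := integrableZl measurableT a ip.
have ibq := integrableZl measurableT b iq.
rewrite /Ep -!RintegralZl // -RintegralD // mulrC -RintegralZl //; last first.
  exact: (integrableD measurableT iap ibq).
by congr Rintegral; apply: funext => x; ring.
Qed.

End ExpectationLinearity.

Lemma risk_eq_RPC (d : measure_display) (T : measurableType d) (R : realType)
  (mu : {measure set T -> \bar R}) (pp : R) (pP pN : T -> R)
  (ell : R -> bool -> R) (f : T -> R) :
  (forall y, mu.-integrable setT (fun x => (pP x * ell (f x) y)%:E)) ->
  (forall y, mu.-integrable setT (fun x => (pN x * ell (f x) y)%:E)) ->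
  risk mu pp pP pN ell f = RPC_plus mu pp pP pN ell f + RPC_minus mu pp pP pN ell f.
Proof.
move=> iP iN.
(* Both normalisers equal pp^2 - pp + 1 > 0, so no range condition on pp is needed. *)
have K_neq0 : (1 - pp) ^+ 2 + pp != 0 by apply/lt0r_neq0; nra.
have L_neq0 : pp ^+ 2 + (1 - pp) != 0 by apply/lt0r_neq0; nra.
rewrite /risk /RPC_plus /RPC_minus /ptilde_plus /ptilde_minus.
rewrite !Ep_mixture; try exact: integrable_mulrBr.
rewrite !Ep_subr //.
by field.
Qed.

Lemma excess_risk_le_deviations {X : Type} {R : realDomainType}
  (r P M hP hM : X -> R) (fhat fstar : X) :
  r fhat = P fhat + M fhat -> r fstar = P fstar + M fstar ->
  hP fhat + hM fhat <= hP fstar + hM fstar ->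
  r fhat - r fstar <=
    (`|P fhat - hP fhat| + `|P fstar - hP fstar|)
    + (`|M fhat - hM fhat| + `|M fstar - hM fstar|).
Proof.
move=> -> -> hmin.
have := ler_norm (P fhat - hP fhat); have := ler_norm (hP fstar - P fstar).
have := ler_norm (M fhat - hM fhat); have := ler_norm (hM fstar - M fstar).
rewrite (distrC (P fstar)) (distrC (M fstar)).
lra.
Qed.

Lemma normD_le_twice_ereal_sup {X : Type} {R : realType} {F : set X}
  (g : X -> R) {u v : X} :
  F u -> F v ->
  ((`|g u| + `|g v|)%:E <= 2%:E * ereal_sup [set `|g f|%:E | f in F])%E.
Proof.
move=> Fu Fv; rewrite mule_natl mule2n EFinD.
by apply: leeD; apply: ereal_sup_ubound; [exists u | exists v].
Qed.

Theorem lemma2 (d : measure_display) (T : measurableType d) (R : realType)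
  (mu : {measure set T -> \bar R})
  (pp : R) (pP pN : T -> R) (ell : R -> bool -> R) (F : set (T -> R))
  (n : nat) (xs xs' : 'I_n -> T) (fhat fstar : T -> R) :
  0 < pp < 1 ->
  is_density mu pP -> is_density mu pN ->
  (forall z y, 0 <= ell z y) ->
  (forall f y, F f ->
     mu.-integrable setT (fun x => (pP x * ell (f x) y)%:E) /\
     mu.-integrable setT (fun x => (pN x * ell (f x) y)%:E)) ->
  (0 < n)%N ->
  F fhat -> (forall f, F f -> RPC_hat pp ell xs xs' fhat <= RPC_hat pp ell xs xs' f) ->
  F fstar -> (forall f, F f -> risk mu pp pP pN ell fstar <= risk mu pp pP pN ell f) ->
  ((risk mu pp pP pN ell fhat - risk mu pp pP pN ell fstar)%:E <=
     2%:E * ereal_sup [set (`|RPC_plus mu pp pP pN ell f - RPC_hat_plus pp ell xs f|)%:E | f in F]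
   + 2%:E * ereal_sup [set (`|RPC_minus mu pp pP pN ell f - RPC_hat_minus pp ell xs' f|)%:E | f in F])%E.
Proof.
move=> _ _ _ _ hint _ Fhat hmin Fstar _.
have risk_split f : F f ->
    risk mu pp pP pN ell f = RPC_plus mu pp pP pN ell f + RPC_minus mu pp pP pN ell f.
  by move=> Ff; apply: risk_eq_RPC => y; have [] := hint f y Ff.
set devP := fun f => RPC_plus mu pp pP pN ell f - RPC_hat_plus pp ell xs f.
set devM := fun f => RPC_minus mu pp pP pN ell f - RPC_hat_minus pp ell xs' f.
apply: le_trans _ (leeD (normD_le_twice_ereal_sup devP Fhat Fstar)
                        (normD_le_twice_ereal_sup devM Fhat Fstar)).
rewrite /devP /devM -EFinD lee_fin.
apply: (excess_risk_le_deviations (risk mu pp pP pN ell)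
          (RPC_plus mu pp pP pN ell) (RPC_minus mu pp pP pN ell)
          (RPC_hat_plus pp ell xs) (RPC_hat_minus pp ell xs')).
- exact: risk_split.
- exact: risk_split.
- exact: hmin.
Qed.
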